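(* Identify $e_1,e_2,e_3$ with the three non-zero elements of the field $\mathbb F_4$ of order $4$. Let $g:1\to n$ be a morphism of $\mathbf{PCG}$ and $i,i(1),\dots,i(n)\in\{1,2,3\}$. If $\langle F(g)(e_i),e_{i(1)}\otimes\cdots\otimes e_{i(n)}\rangle\neq0$, then $e_i=e_{i(1)}+\cdots+e_{i(n)}$ in $\mathbb F_4$. Consequently, for any two morphisms $f,g:1\to n$ of $\mathbf{PCG}$, $\langle F(g)(e_i),F(f)(e_j)\rangle=0$ whenever $i\neq j$.
   Context: Let $\mathbb K$ be a field of characteristic zero, $V$ a $3$-dimensional $\mathbb K$-vector space with basis $\{e_1,e_2,e_3\}$, and $V^{\otimes n}$ carries the inner product making $\{e_{i(1)}\otimes\cdots\otimes e_{i(n)}\}$ orthonormal. $\mathbf{CG}$ is the strict monoidal category whose objects are non-negative integers and whose morphisms $m\to n$ are PL regular immersions in the strip $\mathbb R\times[0,1]$ of graphs with all vertices of degree $3$ except $m$ top and $n$ bottom free ends (closed vertex-free loops allowed); composition stacks, tensor places side by side. It is generated by $\cap:0\to2$, $\cup:2\to0$, $\lambda:1\to2$ (vertex with one top, two bottom ends), $y:2\to1$, $x:2\to2$ (crossing), $I=id_1$. $\mathbf{PCG}$ is the subcategory generated by $\cap,\cup,\lambda,y,I$ (planar graphs). The monoidal functor $F$ has $F(n)=V^{\otimes n}$, $F(\cap)(1)=\sum_i e_i\otimes e_i$, $F(\cup)(e_i\otimes e_j)=\delta_{i,j}$, $F(\lambda)(e_i)=\sum e_j\otimes e_k$ over ordered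 $(j,k)$ with $\{i,j,k\}=\{1,2,3\}$, $F(y)(e_i\otimes e_j)=e_k$ if $\{i,j,k\}=\{1,2,3\}$ and $0$ if $i=j$, $F(I)=id_V$. *)

From HB Require Import structures.
From mathcomp Require Import all_boot all_order all_algebra.
Set Implicit Arguments. Unset Strict Implicit. Unset Printing Implicit Defensive.
Import GRing.Theory.
Local Open Scope ring_scope.

(* Generating expressions for morphisms of PCG (planar closed graphs).
   [pcg m n] : expressions for morphisms m -> n, built from the generators
   cap : 0 -> 2, cup : 2 -> 0, lambda : 1 -> 2, y : 2 -> 1, I = id_1 (and id_0,
   the empty diagram) by composition (stacking) and tensor (juxtaposition).
   Every morphism of PCG is represented by such an expression. *)
Inductive pcg : nat -> nat -> Type :=
| PCap : pcg 0 2
| PCup : pcg 2 0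
| PLam : pcg 1 2
| PY : pcg 2 1
| PI : pcg 1 1
| PId0 : pcg 0 0
| PComp : forall m k n, pcg m k -> pcg k n -> pcg m n
| PTens : forall m1 n1 m2 n2, pcg m1 n1 -> pcg m2 n2 -> pcg (m1 + m2)%N (n1 + n2)%N.

(* Basis vector e_{i(1)} (x) ... (x) e_{i(n)} is indexed by the sequence
   [:: i(1); ...; i(n)] of elements of 'I_3 (0,1,2 stand for e_1,e_2,e_3). *)
Definition distinct3 (i j k : 'I_3) : bool := [&& i != j, j != k & i != k].

Section Functor.
Variable K : fieldType.

(* [Fcoef g s t] = < F(g)(e_s), e_t >, the matrix coefficient of F(g). *)
Fixpoint Fcoef m n (g : pcg m n) : seq 'I_3 -> seq 'I_3 -> K :=
  match g with
  | PCap => fun s t => if (s, t) is ([::], [:: a; b]) then (a == b)%:R else 0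
  | PCup => fun s t => if (s, t) is ([:: a; b], [::]) then (a == b)%:R else 0
  | PLam => fun s t => if (s, t) is ([:: i], [:: j; k]) then (distinct3 i j k)%:R else 0
  | PY => fun s t => if (s, t) is ([:: i; j], [:: k]) then (distinct3 i j k)%:R else 0
  | PI => fun s t => if (s, t) is ([:: i], [:: j]) then (i == j)%:R else 0
  | PId0 => fun s t => if (s, t) is ([::], [::]) then 1 else 0
  | PComp m k n f h => fun s t =>
      \sum_(u : k.-tuple 'I_3) Fcoef f s u * Fcoef h u t
  | PTens m1 n1 m2 n2 f h => fun s t =>
      Fcoef f (take m1 s) (take n1 t) * Fcoef h (drop m1 s) (drop n1 t)
  end.

(* Inner product < F(g)(e_s), F(f)(e_r) > for g, f : 1 -> n (orthonormal basis). *)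
Definition Finner n (g f : pcg 1 n) (s r : seq 'I_3) : K :=
  \sum_(t : n.-tuple 'I_3) Fcoef g s t * Fcoef f r t.
End Functor.

From HB Require Import structures.
From mathcomp Require Import all_boot all_order all_algebra all_field.
Import GRing.Theory.
Local Open Scope ring_scope.

(* Label each basis vector e_i by phi i in F_4 and weigh a tensor by the sum of
   its labels.  Every generator of PCG has nonzero coefficients only between
   tensors of equal weight: a cap or cup creates or kills two equal labels,
   whose sum vanishes in characteristic 2, and a trivalent vertex joins three
   distinct nonzero labels, one of which is the sum of the other two because
   F_4 has only three nonzero elements.  Weight is additive under tensor, and a
   nonzero coefficient of a composite factors through a nonzero coefficient of
   each piece, so weight is conserved by every morphism.  Orthogonality follows
   since a basis tensor reached from e_i and from e_j has weight phi i = phi j. *)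

Lemma distinct3_rotate (i j k : 'I_3) : distinct3 i j k -> distinct3 k i j.
Proof. by case/and3P=> ij jk ik; rewrite /distinct3 eq_sym ik ij eq_sym jk. Qed.

Lemma sumr_neq0_exists (V : nmodType) (I : finType) (F : I -> V) :
  \sum_i F i != 0 -> exists i, F i != 0.
Proof.
move=> nz_sum; apply/existsP; move: nz_sum; apply: contraNT => /existsPn F_eq0.
by apply/eqP/big1 => i _; apply/eqP/negbNE/F_eq0.
Qed.

Section WeightConservation.
Context {V : nmodType} {phi : 'I_3 -> V}.
Hypothesis phi_double : forall i, phi i + phi i = 0.
Hypothesis phi_vertex : forall i j k, distinct3 i j k -> phi i = phi j + phi k.

Lemma Fcoef_neq0_weight (K : fieldType) m n (g : pcg m n) (s t : seq 'I_3) :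
  Fcoef K g s t != 0 -> \sum_(x <- s) phi x = \sum_(x <- t) phi x.
Proof.
elim: g s t => [||||||? k ? f IHf h IHh|m1 n1 ? ? f IHf h IHh] s t /=.
- case: s t => [|? ?] [|a [|b [|? ?]]] /=; rewrite ?eqxx //.
  have [-> _|] := eqVneq a b; last by rewrite eqxx.
  by rewrite !big_cons big_nil addr0 phi_double.
- case: s t => [|a [|b [|? ?]]] [|? ?] /=; rewrite ?eqxx //.
  have [-> _|] := eqVneq a b; last by rewrite eqxx.
  by rewrite !big_cons big_nil addr0 phi_double.
- case: s t => [|i [|? ?]] [|j [|k [|? ?]]] /=; rewrite ?eqxx //.
  have [/phi_vertex phi_i _|] := boolP (distinct3 i j k); last by rewrite eqxx.
  by rewrite !big_cons !big_nil !addr0 phi_i.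
- case: s t => [|i [|j [|? ?]]] [|k [|? ?]] /=; rewrite ?eqxx //.
  have [/distinct3_rotate/phi_vertex phi_k _|] := boolP (distinct3 i j k); last by rewrite eqxx.
  by rewrite !big_cons !big_nil !addr0 phi_k.
- case: s t => [|i [|? ?]] [|j [|? ?]] /=; rewrite ?eqxx //.
  by have [->|] := eqVneq i j; last by rewrite eqxx.
- by case: s t => [|? ?] [|? ?]; rewrite ?eqxx.
- by case/sumr_neq0_exists => u; rewrite mulf_eq0 negb_or => /andP[/IHf -> /IHh ->].
- rewrite mulf_eq0 negb_or => /andP[/IHf weight_take /IHh weight_drop].
  by rewrite -(cat_take_drop m1 s) -(cat_take_drop n1 t) !big_cat weight_take weight_drop.
Qed.

Lemma Finner_eq0 (phi_inj : injective phi) (K : fieldType) n (g f : pcg 1 n) (i j : 'I_3) :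
  i != j -> Finner K g f [:: i] [:: j] = 0.
Proof.
rewrite /Finner; apply: contraNeq => /sumr_neq0_exists[t].
rewrite mulf_eq0 negb_or => /andP[/Fcoef_neq0_weight weight_i /Fcoef_neq0_weight weight_j].
by apply/eqP/phi_inj; move: weight_i weight_j; rewrite !big_seq1 => -> ->.
Qed.

End WeightConservation.

Section FieldOfOrderFour.
Context {F : finFieldType} (cardF : #|F| = 4%N).

Lemma card4_pchar2 : (2 \in [pchar F])%N.
Proof. exact: (@card_finPcharP _ 2 2). Qed.

Lemma card4_nz_distinct_add (a b c : F) :
  a != 0 -> b != 0 -> c != 0 -> a != b -> b != c -> a != c -> a = b + c.
Proof.
move=> a0 b0 c0 ab bc ac; apply/eqP; apply: contraT => a_neq_bc.
have bc0 : b + c != 0 by rewrite addr_eq0 (oppr_pchar2 card4_pchar2).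
have bc_b : b + c != b by rewrite -subr_eq0 addrAC subrr add0r.
have bc_c : b + c != c by rewrite -subr_eq0 addrK.
have five_elems : uniq [:: 0; a; b; c; b + c].
  rewrite /= !inE !negb_or !(eq_sym 0) a0 b0 c0 bc0 ab ac bc a_neq_bc.
  by rewrite (eq_sym b) (eq_sym c) bc_b bc_c.
by have := uniq_leq_size five_elems (fun y _ => mem_enum F y); rewrite -cardE cardF.
Qed.

End FieldOfOrderFour.

Theorem mainTheorem6 (K : fieldType) (charK0 : [pchar K] =i pred0)
  (F4 : finFieldType) (cardF4 : #|F4| = 4%N)
  (phi : 'I_3 -> F4) (phi_inj : injective phi) (phi_nz : forall i, phi i != 0)
  (n : nat) (g : pcg 1 n) :
  (forall (i : 'I_3) (t : n.-tuple 'I_3),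
      Fcoef K g [:: i] t != 0 -> phi i = \sum_(x <- t) phi x) /\
  (forall (f : pcg 1 n) (i j : 'I_3), i != j -> Finner K g f [:: i] [:: j] = 0).
Proof.
have phi_double i : phi i + phi i = 0 by rewrite (addrr_pchar2 (card4_pchar2 cardF4)).
have phi_vertex i j k : distinct3 i j k -> phi i = phi j + phi k.
  by case/and3P=> ij jk ik; apply: card4_nz_distinct_add; rewrite ?(inj_eq phi_inj).
split=> [i t /(Fcoef_neq0_weight phi_double phi_vertex) <-|f i j].
  by rewrite big_seq1.
exact: (Finner_eq0 phi_double phi_vertex phi_inj K n g f i j).
Qed.
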